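(* Let $p$ be an odd prime. If $M$ is an $A$-module which is free of finite rank over $\mathbb{Z}_{(p)}$, then $\Phi_nM=0$ for some $n$.
   Context: $A$ is the ring of degree zero stable operations in $p$-local complex $K$-theory (a $\mathbb{Z}_{(p)}$-algebra). Fix $q$ primitive mod $p^2$, $\Psi^q\in A$ the Adams operation, $q_i=q^{(-1)^i\lfloor i/2\rfloor}$, $\Theta_n(X)=\prod_{i=1}^n(X-q_i)$, and $\Phi_n=\Theta_n(\Psi^q)\in A$; every element of $A$ is uniquely a convergent sum $\sum_{n\ge0}a_n\Phi_n$ with $a_n\in\mathbb{Z}_{(p)}$. *)

From HB Require Import structures.
From mathcomp Require Import all_boot all_order all_algebra.
Set Implicit Arguments. Unset Strict Implicit. Unset Printing Implicit Defensive.
Import Order.TTheory GRing.Theory Num.Theory.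
Local Open Scope ring_scope.

(* Z_(p) as the subring of rat of fractions whose denominator is prime to p. *)
Definition inZpl (p : nat) (x : rat) : bool := ~~ (p %| absz (denq x))%N.

Definition prim_root_mod (q : int) (m : nat) : Prop :=
  forall k : nat, ((m%:Z %| q ^+ k - 1)%Z = (totient m %| k)%N).

Definition qi (q : int) (i : nat) : rat :=
  if odd i then ((q%:~R : rat) ^- (i./2)) else ((q%:~R : rat) ^+ (i./2)).

Definition Theta (q : int) (n : nat) : {poly rat} :=
  \prod_(1 <= i < n.+1) ('X - (qi q i)%:P).

(* Coordinates of a polynomial in the basis (Theta_n)_n (Newton form):
   P = c_0 + (X - q_1)(c_1 + (X - q_2)(c_2 + ...)). *)
Fixpoint newton_coef (q : int) (j k : nat) (P : {poly rat}) : rat :=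
  match k with
  | 0 => P.[qi q j.+1]
  | k'.+1 => newton_coef q j.+1 k'
               ((P - (P.[qi q j.+1])%:P) %/ ('X - (qi q j.+1)%:P))
  end.

Definition theta_coef (q : int) (k : nat) (P : {poly rat}) : rat :=
  newton_coef q 0 k P.

(* The ring A of degree-zero stable operations in p-local K-theory:
   an element is the convergent sum  sum_n a n * Phi_n  with a n in Z_(p);
   we represent it by its coefficient sequence a. *)
Definition opA := nat -> rat.

Definition isA (p : nat) (a : opA) : Prop := forall n, inZpl p (a n).

Definition addA (a b : opA) : opA := fun k => a k + b k.
Definition scaleA (c : rat) (a : opA) : opA := fun k => c * a k.

(* Product: Phi_m Phi_n = (Theta_m Theta_n)(Psi^q), expanded in the Phi basis;
   only terms with m, n <= k contribute to the coefficient of Phi_k. *)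
Definition mulA (q : int) (a b : opA) : opA := fun k =>
  theta_coef q k ((\sum_(m < k.+1) a m *: Theta q m) *
                  (\sum_(n < k.+1) b n *: Theta q n)).

(* Phi_n = Theta_n(Psi^q) is the n-th basis element; Phi_0 = 1. *)
Definition PhiA (n : nat) : opA := fun k => (k == n)%:R.
Definition oneA : opA := PhiA 0.
Definition PsiA : opA := fun k => if (k <= 1)%N then 1 else 0.

(* A structure of A-module on the free Z_(p)-module Z_(p)^r (column vectors),
   given by a ring homomorphism rho : A -> End(Z_(p)^r) = M_r(Z_(p)). *)
Definition isAmodule (p : nat) (q : int) (r : nat) (rho : opA -> 'M[rat]_r) : Prop :=
  [/\ forall a, isA p a -> forall i j, inZpl p (rho a i j),
      forall a b, isA p a -> isA p b -> rho (addA a b) = rho a + rho b,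
      forall c a, inZpl p c -> isA p a -> rho (scaleA c a) = c *: rho a,
      forall a b, isA p a -> isA p b -> rho (mulA q a b) = rho a *m rho b
    & rho oneA = 1%:M].

From Pilot Require Import Defs.
From HB Require Import structures.
From mathcomp Require Import all_boot all_order all_algebra.
From mathcomp Require Import zify ring.
From Stdlib Require Import FunctionalExtensionality.

(* Only the Z_(p)-linear structure of A matters: Z_(p) is slender.  Let
   f : A -> Z_(p) be linear and a_n = f(Phi_n).  With exponents
   K_0 <= K_1 <= ... growing fast, put
   y_N = \sum_(n >= N) p^(K_n - K_N) Phi_n.  Then
   y_N = Phi_N + p^(K_(N+1) - K_N) y_(N+1), hence
   f(y_0) = S_N + p^(K_N) f(y_N) with S_N = \sum_(n < N) p^(K_n) a_n.
   So f(y_0) and S_N are p-adically p^(K_N)-close while their heights are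
   small compared with p^(K_N), which forces S_N = f(y_0) for all large N,
   and then p^(K_N) a_N = S_(N+1) - S_N = 0.  Applying this to every matrix
   entry of rho gives a common N with rho(Phi_N) = 0. *)

Set Implicit Arguments.
Unset Strict Implicit.
Unset Printing Implicit Defensive.
Import Order.TTheory GRing.Theory Num.Theory.
Local Open Scope ring_scope.

Definition height (x : rat) : nat := (absz (numq x) + absz (denq x))%N.

Lemma inZpl_natr (p m : nat) : prime p -> inZpl p m%:R.
Proof.
move=> p_pr; rewrite /inZpl -[m%:R]/(m%:~R : rat) denq_int dvdn1.
by case: eqP p_pr => // ->.
Qed.

Section PadicDistance.
Variables (p : nat) (z s : rat).
Hypothesis p_pr : prime p.

Local Notation cross := (numq z * denq s - numq s * denq z).

Lemma cross_denqE : (z - s) * (denq z * denq s)%:~R = cross%:~R.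
Proof.
rewrite intrB !intrM !numqE.
by rewrite mulrBl !mulrA [s * _ * _]mulrAC.
Qed.

Lemma cross_eq0 : (cross == 0) = (z == s).
Proof.
rewrite -(intr_eq0 rat) -cross_denqE mulf_eq0 intr_eq0 mulf_eq0.
by rewrite !denq_eq0 !orbF subr_eq0.
Qed.

Lemma cross_le_height : (absz cross <= height z * height s)%N.
Proof. rewrite /height; nia. Qed.

Lemma pexp_dvd_cross k u : inZpl p u -> z - s = p%:R ^+ k * u ->
  (p ^ k %| absz cross)%N.
Proof.
move=> u_int zsE.
have crossE : cross * denq u = (p ^ k)%N%:Z * (numq u * denq z * denq s).
  apply: (@intr_inj rat); rewrite intrM -cross_denqE zsE.
  rewrite !intrM numqE -pmulrn natrX.
  by ring.
have /(Gauss_dvdl _) <- : coprime (p ^ k) (absz (denq u)).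
  by apply: coprimeXl; rewrite prime_coprime.
by rewrite -abszM crossE abszM dvdn_mulr.
Qed.

Lemma padic_close_eq k u : inZpl p u -> z - s = p%:R ^+ k * u ->
  (height z * height s < p ^ k)%N -> z = s.
Proof.
move=> u_int zsE hlt; apply/eqP; rewrite -cross_eq0.
apply: contraTT hlt => cross_neq0.
rewrite -leqNgt (leq_trans _ cross_le_height) //.
by rewrite dvdn_leq ?absz_gt0 // (pexp_dvd_cross u_int zsE).
Qed.

End PadicDistance.

Lemma isA_PhiA p N : prime p -> isA p (PhiA N).
Proof. by move=> p_pr n; apply: inZpl_natr. Qed.

Section Weights.
Variables (p : nat) (a : nat -> rat).

(* The pairs (K_N, S_N) with S_N = \sum_(n < N) p^(K_n) a_n; the exponent
   K_(N+1) is taken so large that N * height S_N < p^(K_N). *)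
Fixpoint weights N : nat * rat :=
  if N is N'.+1 then
    let s := (weights N').2 + p%:R ^+ (weights N').1 * a N' in
    (((weights N').1 + N * height s)%N, s)
  else (0%N, 0).

Definition kexp N := (weights N).1.
Definition psum N := (weights N).2.

Lemma psumS N : psum N.+1 = psum N + p%:R ^+ kexp N * a N.
Proof. by []. Qed.

Lemma kexpS N : kexp N.+1 = (kexp N + N.+1 * height (psum N.+1))%N.
Proof. by []. Qed.

Lemma kexp_nondecr : {homo kexp : m n / (m <= n)%N}.
Proof.
by apply: homo_leq => [//|n m l|n]; [apply: leq_trans | rewrite kexpS leq_addr].
Qed.

Lemma height_psum_lt N : (1 < p)%N -> (N * height (psum N) < p ^ kexp N)%N.
Proof.
move=> p_gt1; case: N => [|N]; first by rewrite expn_gt0 ltnW.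
rewrite kexpS expnD (leq_trans (ltn_expl _ p_gt1)) //.
by rewrite leq_pmull // expn_gt0 ltnW.
Qed.

End Weights.

Section Slender.
Variables (p : nat) (f : opA -> rat).
Hypotheses (p_pr : prime p) (f_int : forall a, isA p a -> inZpl p (f a))
  (f_add : forall a b, isA p a -> isA p b -> f (Defs.addA a b) = f a + f b)
  (f_scale : forall c a, inZpl p c -> isA p a -> f (scaleA c a) = c * f a).

Local Notation K := (kexp p (fun n => f (PhiA n))).
Local Notation S := (psum p (fun n => f (PhiA n))).

Definition tail N : opA :=
  fun n => if (N <= n)%N then p%:R ^+ (K n - K N) else 0.

Lemma isA_scale_tail k N : isA p (scaleA (p%:R ^+ k) (tail N)).
Proof.
move=> n; rewrite /scaleA /tail.
case: ifP => _; last by rewrite mulr0 (inZpl_natr 0).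
by rewrite -exprD -natrX inZpl_natr.
Qed.

Lemma isA_tail N : isA p (tail N).
Proof.
by move=> n; have := isA_scale_tail 0 N n; rewrite /scaleA expr0 mul1r.
Qed.

Lemma tailS N :
  tail N = Defs.addA (PhiA N) (scaleA (p%:R ^+ (K N.+1 - K N)) (tail N.+1)).
Proof.
apply: functional_extensionality => n.
rewrite /tail /Defs.addA /scaleA -[PhiA N n]/((n == N)%:R).
case: (ltngtP n N) => [ltnN | ltNn | ->].
- by rewrite mulr0 addr0.
- rewrite add0r -exprD; congr (_ ^+ _).
  have := @kexp_nondecr p (fun n => f (PhiA n)) _ _ (leqnSn N).
  have := @kexp_nondecr p (fun n => f (PhiA n)) _ _ ltNn.
  lia.
- by rewrite subnn mulr0 addr0.
Qed.

Lemma f_tail0 N : f (tail 0) = S N + p%:R ^+ K N * f (tail N).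
Proof.
elim: N => [|N IH]; first by rewrite expr0 mul1r add0r.
have p_int k : inZpl p (p%:R ^+ k) by rewrite -natrX inZpl_natr.
rewrite IH tailS f_add; [| exact: isA_PhiA | exact: isA_scale_tail].
rewrite f_scale; [| exact: p_int | exact: isA_tail].
by rewrite psumS mulrDr addrA mulrA -exprD subnKC // kexp_nondecr.
Qed.

Lemma psum_stable N : (height (f (tail 0)) <= N)%N -> S N = f (tail 0).
Proof.
move=> hN; symmetry; apply: (padic_close_eq p_pr (f_int (isA_tail N))).
  by rewrite (f_tail0 N) addrC addKr.
apply: leq_ltn_trans (height_psum_lt _ N (prime_gt1 p_pr)).
by rewrite leq_mul2r hN orbT.
Qed.

Lemma slender_PhiA : exists N0, forall N, (N0 <= N)%N -> f (PhiA N) = 0.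
Proof.
exists (height (f (tail 0))) => N hN.
have /eqP := psum_stable (leq_trans hN (leqnSn N)).
rewrite psumS psum_stable // -subr_eq0 addrC addKr mulf_eq0 expf_eq0 pnatr_eq0.
by rewrite (gtn_eqF (prime_gt0 p_pr)) andbF => /eqP.
Qed.

End Slender.

Theorem proposition3p6 (p : nat) (q : int) (r : nat) (rho : opA -> 'M[rat]_r) :
  prime p -> odd p -> prim_root_mod q (p ^ 2) ->
  isAmodule p q rho ->
  exists n : nat, rho (PhiA n) = 0.
Proof.
move=> p_pr _ _ [rho_int rho_add rho_scale _ _].
have /fin_all_exists[N0 N0P] (ij : 'I_r * 'I_r) :
    exists N0, forall N, (N0 <= N)%N -> rho (PhiA N) ij.1 ij.2 = 0.
  apply: (slender_PhiA (f := fun a => rho a ij.1 ij.2) p_pr)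
    => [a aA | a b aA bA | c a cZ aA].
  - exact: rho_int.
  - by rewrite rho_add // mxE.
  - by rewrite rho_scale // mxE.
exists (\max_ij N0 ij); apply/matrixP => i j; rewrite mxE.
exact: (N0P (i, j)) (leq_bigmax (i, j)).
Qed.
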